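(* The functor $(\mathbb{A}^{(S)})^{\infty}\times\textup{B}(\mathbb{Z}/p\mathbb{Z})\longrightarrow\Delta_{\mathbb{Z}/p\mathbb{Z}}$ (described in the context) is an equivalence of fibered categories.
   Context: Work over $k=\mathbb{F}_p$ with $G=\mathbb{Z}/p\mathbb{Z}$. For a ring $B$, $B((t))=B[[t]][t^{-1}]$ is the ring of Laurent series. $\Delta_{\mathbb{Z}/p\mathbb{Z}}$ is the category fibered in groupoids over the category of affine $\mathbb{F}_p$-schemes whose fiber over $\textup{Spec} B$ is the groupoid of $\mathbb{Z}/p\mathbb{Z}$-torsors over $B((t))$. By Artin–Schreier theory, for an $\mathbb{F}_p$-algebra $C$ the groupoid $\textup{B}(\mathbb{Z}/p\mathbb{Z})(C)$ of $\mathbb{Z}/p\mathbb{Z}$-torsors over $C$ is identified with the category whose objects are elements $c\in C$ (corresponding to $C[X]/(X^p-X-c)$ with action $X\mapsto X+f$, $f\in\mathbb{F}_p$) and whose morphisms $c\to d$ are elements $u\in C$ with $u^p-u+c=d$ (composition is the sum); in particular $\Delta_{\mathbb{Z}/p\mathbb{Z}}(B)$ is described this way with $C=B((t))$. Let $S=\{n\geq 1 : p\nmid n\}$ and let $\mathbb{A}^{(S)}$ be the functor on $\mathbb{F}_p$-algebras with $\mathbb{A}^{(S)}(B)$ the set of maps $b\colon S\to B$ with $\{s : b_s\neq 0\}$ finite. For a functor $X$ on affine $\mathbb{F}_p$-schemes, $X^{\infty}$ denotes the direct limit of the direct system of Frobenius morphisms $X\xrightarrow{F}X\xrightarrow{F}\cdots$.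 For $k\in\mathbb{N}$ define $\phi_k\colon\mathbb{A}^{(S)}\to\Delta_{\mathbb{Z}/p\mathbb{Z}}$ by $\phi_k(b)=\sum_{s\in S}b_s t^{-sp^k}\in B((t))$, and $\psi_k\colon\mathbb{A}^{(S)}\times\textup{B}(\mathbb{Z}/p\mathbb{Z})\to\Delta_{\mathbb{Z}/p\mathbb{Z}}$ by $\psi_k(b,b_0)=\phi_k(b)+b_0$. For all $b\in\mathbb{A}^{(S)}(B)$ and $b_0\in B$ there is a natural morphism $-\phi_k(b)\colon\psi_{k+1}\circ(F_{\mathbb{A}^{(S)}}\times\textup{id}_{\textup{B}(\mathbb{Z}/p\mathbb{Z})})(b,b_0)\to\psi_k(b,b_0)$ (where $F_{\mathbb{A}^{(S)}}$ is the Frobenius of $\mathbb{A}^{(S)}$), and these maps induce the functor $(\mathbb{A}^{(S)})^{\infty}\times\textup{B}(\mathbb{Z}/p\mathbb{Z})\to\Delta_{\mathbb{Z}/p\mathbb{Z}}$ of the claim. *)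

From HB Require Import structures.
From mathcomp Require Import all_boot all_order all_algebra zify.
From Stdlib Require Import ClassicalEpsilon.
Set Implicit Arguments. Unset Strict Implicit. Unset Printing Implicit Defensive.
Import Order.TTheory GRing.Theory Num.Theory.
Local Open Scope ring_scope.

(* Laurent series B((t)) = B[[t]][t^-1]: Z-indexed coefficient         *)
(* families that vanish below some index.                              *)
Section Laurent.
Variable B : comPzRingType.

Record laurent := Laurent {
  lcoef : int -> B;
  lcoef_bdd : exists N : int, forall n : int, n < N -> lcoef n = 0 }.

Definition lbnd (a : laurent) : int :=
  proj1_sig (constructive_indefinite_description _ (lcoef_bdd a)).

Lemma lbndP a n : n < lbnd a -> lcoef a n = 0.
Proof.
rewrite /lbnd; case: constructive_indefinite_description => N /= H; exact: H.
Qed.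

Lemma ladd_bdd (a b : laurent) :
  exists N : int, forall n : int, n < N -> lcoef a n + lcoef b n = 0.
Proof.
exists (Num.min (lbnd a) (lbnd b)) => n; rewrite lt_min => /andP[ha hb].
by rewrite !lbndP ?addr0.
Qed.
Definition ladd (a b : laurent) : laurent :=
  @Laurent (fun n => lcoef a n + lcoef b n) (ladd_bdd a b).

Lemma lopp_bdd (a : laurent) :
  exists N : int, forall n : int, n < N -> - lcoef a n = 0.
Proof. by exists (lbnd a) => n hn; rewrite lbndP ?oppr0. Qed.
Definition lopp (a : laurent) : laurent := @Laurent (fun n => - lcoef a n) (lopp_bdd a).

Lemma lconst_bdd (c : B) :
  exists N : int, forall n : int, n < N -> (if n == 0 then c else 0) = 0.
Proof. by exists 0 => n hn; rewrite lt_eqF. Qed.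
Definition lconst (c : B) : laurent := @Laurent _ (lconst_bdd c).

Definition lzero : laurent := lconst 0.
Definition lone : laurent := lconst 1.

(* Cauchy product: (ab)_n = sum_{i+j=n} a_i b_j, the sum ranging over *)
(* lbnd a <= i, lbnd b <= j (outside this range the terms vanish).    *)
Definition lmul_coef (a b : laurent) (n : int) : B :=
  if lbnd a + lbnd b <= n then
    \sum_(j < (absz (n - lbnd a - lbnd b)%R).+1)
       lcoef a (lbnd a + j%:Z) * lcoef b (n - lbnd a - j%:Z)
  else 0.

Lemma lmul_bdd (a b : laurent) :
  exists N : int, forall n : int, n < N -> lmul_coef a b n = 0.
Proof. by exists (lbnd a + lbnd b) => n hn; rewrite /lmul_coef lt_geF. Qed.
Definition lmul (a b : laurent) : laurent := @Laurent _ (lmul_bdd a b).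

Definition lexp (u : laurent) (k : nat) : laurent := iter k (lmul u) lone.

Definition lsum (s : seq laurent) : laurent := foldr ladd lzero s.

(* Artin-Schreier description of B(Z/pZ)(B((t))):                    *)
(* a morphism c -> d is u with u^p - u + c = d.                        *)
Definition lhom (p : nat) (c d u : laurent) : Prop :=
  ladd (ladd (lexp u p) (lopp u)) c = d.

End Laurent.

(* The functor A^(S): finitely supported maps S -> B, S = {n>=1, p∤n}, *)
(* encoded as maps nat -> B vanishing outside S.                       *)
Section AS.
Variables (p : nat) (B : comPzRingType).

Definition inS (s : nat) : bool := (0 < s)%N && ~~ (p %| s)%N.

Record AS := MkAS {
  asf : nat -> B;
  as_supp : forall s, ~~ inS s -> asf s = 0;
  as_fin : exists N : nat, forall s, (N <= s)%N -> asf s = 0 }.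

Section Frob.
Hypothesis p_gt0 : (0 < p)%N.

Lemma ASF_supp (b : AS) s : ~~ inS s -> asf b s ^+ p = 0.
Proof. by move=> h; rewrite (as_supp b h) expr0n eqn0Ngt p_gt0. Qed.
Lemma ASF_fin (b : AS) : exists N : nat, forall s, (N <= s)%N -> asf b s ^+ p = 0.
Proof.
case: (as_fin b) => N HN; exists N => s hs.
by rewrite HN // expr0n eqn0Ngt p_gt0.
Qed.
Definition ASF (b : AS) : AS := @MkAS (fun s => asf b s ^+ p) (@ASF_supp b) (ASF_fin b).
End Frob.

(* phi_k(b) = sum_{s in S} b_s t^{- s p^k}, given coefficientwise:   *)
(* the coefficient of t^n is b_s if n = - s p^k, and 0 otherwise.    *)
Definition phi_coef (k : nat) (b : AS) (n : int) : B :=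
  if (n < 0) && (p ^ k %| absz n)%N then asf b (absz n %/ p ^ k)%N else 0.

Lemma phi_bdd k (b : AS) :
  exists N : int, forall n : int, n < N -> phi_coef k b n = 0.
Proof.
case: (as_fin b) => N HN.
exists (- ((N * p ^ k)%N)%:Z) => n hn; rewrite /phi_coef.
case: ifP => // /andP[n0 /divnK dq]; apply: HN.
set P := (p ^ k)%N in dq *; set q := (absz n %/ P)%N in dq *.
rewrite leqNgt; apply/negP => qN.
have : (q * P <= N * P)%N by rewrite leq_mul2r ltnW ?orbT.
rewrite dq; lia.
Qed.
Definition phi (k : nat) (b : AS) : laurent B := @Laurent _ _ (phi_bdd k b).

Definition psi (k : nat) (b : AS) (b0 : B) : laurent B := ladd (phi k b) (lconst b0).

End AS.

(* The functor (A^(S))^oo x B(Z/pZ) -> Delta on the fibre over Spec B. *)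
(* An object of (A^(S))^oo(B) is represented by (k, b) (b at stage k *)
(* of the Frobenius direct system); (k,b) ~ (k',b') iff they agree at  *)
(* some later stage m.                                                 *)
Section Functor.
Variables (p : nat) (B : comPzRingType) (p_gt0 : (0 < p)%N).

Definition Fit (j : nat) (b : AS p B) : AS p B := iter j (ASF p_gt0) b.

Definition colim_eq (k : nat) (b : AS p B) (k' : nat) (b' : AS p B) : Prop :=
  exists m : nat, [/\ (k <= m)%N, (k' <= m)%N & Fit (m - k) b = Fit (m - k') b'].

(* the composite of the transition isomorphisms -phi_j(F^(j-k) b),     *)
(* k <= j < m, is  - trans k m b : psi_m(F^(m-k) b, b0) -> psi_k(b, b0) *)
Definition trans (k m : nat) (b : AS p B) : laurent B :=
  lsum [seq phi j (Fit (j - k) b) | j <- iota k (m - k)].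

(* image under the functor of the morphism                              *)
(*   (id, v) : ([k,b], b0) -> ([k',b'], b0')                            *)
(* (v : b0 -> b0' in B(Z/pZ)(B)), computed through a common stage m     *)
(* with F^(m-k) b = F^(m-k') b'.                                        *)
Definition fmor (k k' m : nat) (b b' : AS p B) (v : B) : laurent B :=
  ladd (ladd (trans k m b) (lconst v)) (lopp (trans k' m b')).

End Functor.

From HB Require Import structures.
From mathcomp Require Import all_boot all_order all_algebra zify ring.
From Stdlib Require Import ProofIrrelevance FunctionalExtensionality.
Import Order.TTheory GRing.Theory Num.Theory.
Local Open Scope ring_scope.
Set Implicit Arguments. Unset Strict Implicit.

(* Since p = 0 in B, the coefficients of u^p are those of u spread out by
   Frobenius: (u^p)_(qp) = u_q^p, and (u^p)_n = 0 when p does not divide n.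
   Hence the equation u^p - u + c = d decouples along the rays i |-> ±s p^i
   (s in S) into the recursions x_i = x_(i-1)^p + e_i, where x = -u and e = d - c
   on the ray, solved by x_i = e_i + e_(i-1)^p + e_(i-2)^(p^2) + ...
   On positive rays this solves every equation.  On a negative ray the recursion
   can be stopped at a stage K beyond the pole order of c, leaving the single
   term b_s t^(-s p^K): this is essential surjectivity, with b at stage K.
   Conversely, for a morphism between two normal forms the solution vanishes at
   late stages of the negative rays, which forces the Frobenius twists of b and
   b' to agree there; and a morphism is determined by its constant term, since
   the only Laurent series fixed by u |-> u^p are the constants. *)

Section LaurentSeries.
Variable B : comPzRingType.
Implicit Types (a b u : laurent B) (L La Lb n : int).

Definition lbounded a L := forall n, n < L -> lcoef a n = 0.

Lemma lbounded_lbnd a : lbounded a (lbnd a).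
Proof. exact: lbndP. Qed.

Lemma laurent_ext a b : lcoef a =1 lcoef b -> a = b.
Proof.
case: a b => fa ha [fb hb] /= /functional_extensionality efab.
by subst fb; congr Laurent; exact: proof_irrelevance.
Qed.

Lemma lcoef_lsum (s : seq (laurent B)) n : lcoef (lsum s) n = \sum_(a <- s) lcoef a n.
Proof. by elim: s => [|a s IH] /=; rewrite ?big_nil ?if_same // big_cons IH. Qed.

Definition lmul_window a b La Lb n : B :=
  if La + Lb <= n then
    \sum_(j < (absz (n - La - Lb)%R).+1) lcoef a (La + j%:Z) * lcoef b (n - La - j%:Z)
  else 0.

Lemma lmul_window_predl a b La Lb n : lcoef a (La - 1) = 0 ->
  lmul_window a b (La - 1) Lb n = lmul_window a b La Lb n.
Proof.
move=> a0; rewrite /lmul_window; case: (lerP (La + Lb) n) => h.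
  rewrite ifT; last by lia.
  have -> : absz (n - (La - 1) - Lb)%R = (absz (n - La - Lb)%R).+1 by lia.
  rewrite big_ord_recl /= addr0 a0 mul0r add0r; apply: eq_bigr => j _.
  by congr (lcoef _ _ * lcoef _ _); rewrite /bump /=; lia.
case: ifP => // h'.
have -> : absz (n - (La - 1) - Lb)%R = 0%N by lia.
by rewrite big_ord1 addr0 a0 mul0r.
Qed.

Lemma lmul_window_predr a b La Lb n : lcoef b (Lb - 1) = 0 ->
  lmul_window a b La (Lb - 1) n = lmul_window a b La Lb n.
Proof.
move=> b0; rewrite /lmul_window; case: (lerP (La + Lb) n) => h.
  rewrite ifT; last by lia.
  have -> : absz (n - La - (Lb - 1))%R = (absz (n - La - Lb)%R).+1 by lia.
  rewrite big_ord_recr /=.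
  have -> : n - La - (absz (n - La - Lb)%R).+1%:Z = Lb - 1 by lia.
  by rewrite b0 mulr0 addr0.
case: ifP => // h'.
have -> : absz (n - La - (Lb - 1))%R = 0%N by lia.
by rewrite big_ord1 /= addr0 subr0 (_ : n - La = Lb - 1) ?b0 ?mulr0 //; lia.
Qed.

Lemma lmul_window_lel a b La (La' : int) Lb n : lbounded a La -> La' <= La ->
  lmul_window a b La' Lb n = lmul_window a b La Lb n.
Proof.
move=> ha le; have -> : La' = La - (absz (La - La')%R)%:Z by lia.
elim: (absz _) => [|d IH]; first by rewrite subr0.
rewrite -IH (_ : La - d.+1%:Z = La - d%:Z - 1); last by lia.
by apply: lmul_window_predl; apply: ha; lia.
Qed.

Lemma lmul_window_ler a b La Lb (Lb' : int) n : lbounded b Lb -> Lb' <= Lb ->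
  lmul_window a b La Lb' n = lmul_window a b La Lb n.
Proof.
move=> hb le; have -> : Lb' = Lb - (absz (Lb - Lb')%R)%:Z by lia.
elim: (absz _) => [|d IH]; first by rewrite subr0.
rewrite -IH (_ : Lb - d.+1%:Z = Lb - d%:Z - 1); last by lia.
by apply: lmul_window_predr; apply: hb; lia.
Qed.

Lemma lcoef_lmul a b La Lb n : lbounded a La -> lbounded b Lb ->
  lcoef (lmul a b) n = lmul_window a b La Lb n.
Proof.
move=> ha hb.
have -> : lcoef (lmul a b) n = lmul_window a b (lbnd a) (lbnd b) n by [].
set ma := Num.min La (lbnd a); set mb := Num.min Lb (lbnd b).
have [maLa malbnd] : ma <= La /\ ma <= lbnd a by rewrite !ge_min !lexx ?orbT.
have [mbLb mblbnd] : mb <= Lb /\ mb <= lbnd b by rewrite !ge_min !lexx ?orbT.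
rewrite -(lmul_window_lel _ _ _ ha maLa) -(lmul_window_ler _ _ _ hb mbLb).
rewrite -(lmul_window_lel _ _ _ (@lbounded_lbnd a) malbnd).
by rewrite -(lmul_window_ler _ _ _ (@lbounded_lbnd b) mblbnd).
Qed.

Fixpoint cauchy_pow (c : nat -> B) (j k : nat) : B :=
  if j is j'.+1 then \sum_(i < k.+1) c i * cauchy_pow c j' (k - i) else (k == 0)%:R.

Lemma lcoef_lexp u L (j : nat) n : lbounded u L ->
  lcoef (lexp u j) n = if j%:Z * L <= n
    then cauchy_pow (fun i => lcoef u (L + i%:Z)) j (absz (n - j%:Z * L)%R) else 0.
Proof.
move=> hu; elim: j n => [|j IH] n.
  by rewrite mul0r subr0 /=; case: n => [[|k]|k].
have hj : lbounded (lexp u j) (j%:Z * L) by move=> x hx; rewrite IH lt_geF.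
rewrite [lexp _ _]/= (lcoef_lmul _ hu hj) /lmul_window.
have -> : j.+1%:Z * L = L + j%:Z * L by rewrite intS mulrDl mul1r.
case: ifP => // h; rewrite /= (_ : absz _ = absz (n - (L + j%:Z * L))%R); last by lia.
apply: eq_bigr => i _; rewrite IH ifT; last by have := ltn_ord i; lia.
by congr (_ * cauchy_pow _ _ _); have := ltn_ord i; lia.
Qed.

Lemma lhomE p c d u : lhom p c d u <->
  forall n, lcoef (lexp u p) n - lcoef u n + lcoef c n = lcoef d n.
Proof. by split=> [<- //|hu]; apply: laurent_ext. Qed.
End LaurentSeries.

(* B viewed as a nontrivial ring, so that [pchar _] and {poly _} apply to it. *)
Definition nz_ring (B : comPzRingType) of (1 : B) != 0 : Type := B.
HB.instance Definition _ (B : comPzRingType) (h : (1 : B) != 0) :=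
  GRing.ComPzRing.copy (nz_ring h) B.
HB.instance Definition _ (B : comPzRingType) (h : (1 : B) != 0) :=
  GRing.PzSemiRing_isNonZero.Build (nz_ring h) h.

Lemma one_eq0_all_eq (B : pzSemiRingType) (x y : B) : 1 = 0 :> B -> x = y.
Proof. by move=> h10; rewrite -[x]mulr1 -[y]mulr1 h10 !mulr0. Qed.

Lemma cauchy_powE (B : comPzRingType) (h : (1 : B) != 0) M (c : nat -> B) j k :
  (k < M)%N ->
  cauchy_pow c j k = ((\poly_(i < M) (c i : nz_ring h)) ^+ j)`_k.
Proof.
elim: j k => [|j IH] k kM /=; first by rewrite expr0 coef1.
rewrite exprS coefM; apply: eq_bigr => i _.
have iM : (i < M)%N by rewrite (leq_ltn_trans _ kM) // -ltnS.
by rewrite coef_poly iM IH // (leq_ltn_trans _ kM) // leq_subr.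
Qed.

Section PrimeCharacteristic.
Variables (p : nat) (B : comPzRingType).
Hypotheses (hp : prime p) (hB : p%:R = 0 :> B).
Implicit Types (c d e u v w : laurent B) (x y : nat -> B) (n q : int).

Lemma pchar_nz_ring (h : (1 : B) != 0) : p \in [pchar nz_ring h].
Proof. by apply/andP; split => //; apply/eqP. Qed.

Lemma frobnD k (a b : B) : (a + b) ^+ (p ^ k) = a ^+ (p ^ k) + b ^+ (p ^ k).
Proof.
have [h10|h] := eqVneq (1 : B) 0; first exact: one_eq0_all_eq.
apply: (@exprDn_pchar (nz_ring h)).
by rewrite pnatX (eq_pnat _ (pcharf_eq (pchar_nz_ring h))) pnat_id ?orbT.
Qed.

Lemma frobn0 k : (0 : B) ^+ (p ^ k) = 0.
Proof. by rewrite expr0n expn_eq0 (gtn_eqF (prime_gt0 hp)). Qed.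

Lemma frobnN k (a : B) : (- a) ^+ (p ^ k) = - a ^+ (p ^ k).
Proof. by apply/eqP; rewrite -subr_eq0 opprK addrC -frobnD subrr frobn0. Qed.

Lemma frobnB k (a b : B) : (a - b) ^+ (p ^ k) = a ^+ (p ^ k) - b ^+ (p ^ k).
Proof. by rewrite frobnD frobnN. Qed.

Lemma frobn_sum k I (r : seq I) (P : pred I) (F : I -> B) :
  (\sum_(i <- r | P i) F i) ^+ (p ^ k) = \sum_(i <- r | P i) F i ^+ (p ^ k).
Proof. exact: (big_morph _ (frobnD k) (frobn0 k)). Qed.

Lemma frob0 : (0 : B) ^+ p = 0.
Proof. by rewrite -[p]expn1 frobn0. Qed.

Lemma frobN (a : B) : (- a) ^+ p = - a ^+ p.
Proof. by rewrite -[p]expn1 frobnN. Qed.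

Lemma frob_sum I (r : seq I) (P : pred I) (F : I -> B) :
  (\sum_(i <- r | P i) F i) ^+ p = \sum_(i <- r | P i) F i ^+ p.
Proof. by rewrite -[p]expn1 frobn_sum. Qed.

Lemma cauchy_pow_pchar x k :
  cauchy_pow x p k = if (p %| k)%N then x (k %/ p)%N ^+ p else 0.
Proof.
have [h10|h] := eqVneq (1 : B) 0; first exact: one_eq0_all_eq.
have chp : p \in [pchar {poly nz_ring h}] by rewrite pchar_poly pchar_nz_ring.
rewrite (@cauchy_powE _ h k.+1) // -(pFrobenius_autE chp) poly_def rmorph_sum /=.
rewrite coef_sum.
under eq_bigr => i _ do rewrite pFrobenius_autE exprZn -exprM coefZ coefXn.
case: ifP => [/dvdnP[q ->]|kNdvd].
  have qk : (q < (q * p).+1)%N by rewrite ltnS leq_pmulr ?prime_gt0.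
  rewrite mulnK ?prime_gt0 // (bigD1 (Ordinal qk)) //= eqxx mulr1 big1 ?addr0 //.
  move=> i /eqP iq; rewrite eqn_mul2r (gtn_eqF (prime_gt0 hp)) /=.
  by case: eqP => [iqv|]; [case: iq; apply: val_inj | rewrite mulr0].
rewrite big1 // => i _; case: eqP => [kip|]; last by rewrite mulr0.
by have := dvdn_mull i (dvdnn p); rewrite -kip kNdvd.
Qed.

Lemma absz_dvdP n : (p %| absz n)%N -> exists q, n = q * p%:Z.
Proof. by move=> pn; apply/dvdzP; rewrite dvdzE. Qed.

Lemma lcoef_lexp_mulp u q : lcoef (lexp u p) (q * p%:Z) = lcoef u q ^+ p.
Proof.
rewrite (lcoef_lexp _ _ (@lbounded_lbnd _ u)); set L := lbnd u.
have p_gt0 : (0 : int) < p%:Z by rewrite ltz_nat prime_gt0.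
case: ifP => qL.
  rewrite cauchy_pow_pchar (_ : absz _ = absz (q - L)%R * p)%N; last by nia.
  by rewrite dvdn_mull // mulnK ?prime_gt0 //; congr (lcoef u _ ^+ p); nia.
by rewrite lbndP ?frob0 //; nia.
Qed.

Lemma lcoef_lexp_Ndvd u n : ~~ (p %| absz n)%N -> lcoef (lexp u p) n = 0.
Proof.
move=> pNn; rewrite (lcoef_lexp _ _ (@lbounded_lbnd _ u)).
case: ifP => // _; rewrite cauchy_pow_pchar; case: ifP => // /absz_dvdP[q nE].
by move: pNn; rewrite (_ : n = (q + lbnd u) * p%:Z) ?abszM ?dvdn_mull //; lia.
Qed.

Lemma lcoef_lexp_pchar u n : lcoef (lexp u p) n =
  if (p %| absz n)%N then lcoef u (n %/ p%:Z)%Z ^+ p else 0.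
Proof.
case: ifP => [/absz_dvdP[q ->]|/negbT/lcoef_lexp_Ndvd//].
by rewrite lcoef_lexp_mulp mulzK // eqz_nat (gtn_eqF (prime_gt0 hp)).
Qed.

Lemma lcoef_lexpD u v n :
  lcoef (lexp (ladd u v) p) n = lcoef (lexp u p) n + lcoef (lexp v p) n.
Proof.
rewrite !lcoef_lexp_pchar; case: ifP => _; last by rewrite addr0.
by rewrite -[p]expn1 frobnD.
Qed.

Lemma lcoef_lexpN u n : lcoef (lexp (lopp u) p) n = - lcoef (lexp u p) n.
Proof. by rewrite !lcoef_lexp_pchar; case: ifP => _; rewrite ?oppr0 ?frobN. Qed.

Lemma lhom_comp c d e u v : lhom p c d u -> lhom p d e v -> lhom p c e (ladd u v).
Proof.
move=> /lhomE hu /lhomE hv; apply/lhomE => n.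
by rewrite lcoef_lexpD /= -hv -hu; ring.
Qed.

Lemma lhom_inv c d u : lhom p c d u -> lhom p d c (lopp u).
Proof. by move=> /lhomE hu; apply/lhomE => n; rewrite lcoef_lexpN /= -hu; ring. Qed.

Lemma lhom_add c d u c' d' u' :
  lhom p c d u -> lhom p c' d' u' -> lhom p (ladd c c') (ladd d d') (ladd u u').
Proof.
move=> /lhomE hu /lhomE hu'; apply/lhomE => n.
by rewrite lcoef_lexpD /= -hu -hu'; ring.
Qed.

Lemma lhom_addr c d e u : lhom p c d u -> lhom p (ladd c e) (ladd d e) u.
Proof. by move=> /lhomE hu; apply/lhomE => n; rewrite /= -hu; ring. Qed.

Lemma lhom_const (b0 b0' a : B) :
  a ^+ p - a + b0 = b0' -> lhom p (lconst b0) (lconst b0') (lconst a).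
Proof.
move=> ha; apply/lhomE => n; rewrite lcoef_lexp_pchar /=.
have [->|n0] := eqVneq n 0; first by rewrite dvdn0 div0z.
rewrite subr0 addr0; case: ifP => [/absz_dvdP[q nE]|//].
have q0 : q != 0 by apply: contraNneq n0 => q0; rewrite nE q0 mul0r.
by rewrite nE mulzK ?eqz_nat ?(gtn_eqF (prime_gt0 hp)) // (negbTE q0) frob0.
Qed.

Lemma lhom_coef0 c d u : lhom p c d u ->
  lcoef u 0 ^+ p - lcoef u 0 + lcoef c 0 = lcoef d 0.
Proof. by move=> /lhomE/(_ 0); rewrite lcoef_lexp_pchar dvdn0 div0z. Qed.

(* The rays i |-> ±s p^i, s in S, partition the nonzero integers. *)
Definition ray (neg : bool) (s i : nat) : int := (-1) ^+ neg * (s * p ^ i)%N%:Z.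

Lemma absz_ray neg s i : absz (ray neg s i) = (s * p ^ i)%N.
Proof. exact: abszMsign. Qed.

Lemma rayS neg s i : ray neg s i.+1 = ray neg s i * p%:Z.
Proof. by rewrite /ray expnSr mulnA PoszM mulrA. Qed.

Lemma ray_eq0 neg s i : (ray neg s i == 0) = (s == 0%N).
Proof.
by rewrite /ray mulf_eq0 signr_eq0 eqz_nat muln_eq0 expn_eq0 (gtn_eqF (prime_gt0 hp)) orbF.
Qed.

Lemma ray_lt0 neg s i : (0 < s)%N -> (ray neg s i < 0) = neg.
Proof.
move=> s_gt0; have : (0 < s * p ^ i)%N by rewrite muln_gt0 s_gt0 expn_gt0 prime_gt0.
by case: neg; rewrite /ray ?expr1 ?expr0 ?mulN1r ?mul1r; lia.
Qed.

Lemma ray_decomp n : n != 0 -> exists neg s j, inS p s /\ n = ray neg s j.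
Proof.
move=> n0; have n_gt0 : (0 < absz n)%N by rewrite absz_gt0.
have [s p'_s nE] := pfactor_coprime hp n_gt0.
exists (n < 0), s, (logn p (absz n)); split; last by rewrite /ray -nE -intEsign.
rewrite /inS -(prime_coprime _ hp) p'_s andbT lt0n.
by apply: contraTneq n_gt0 => s0; rewrite nE s0.
Qed.

Lemma ray_logn s i : inS p s -> logn p (s * p ^ i) = i.
Proof. by case/andP=> _ p'_s; rewrite logn_Gauss ?pfactorK // prime_coprime. Qed.

(* The solution of the recursion z_0 = x_0, z_(j+1) = z_j^p + x_(j+1). *)
Definition as_chain x (j : nat) : B := \sum_(i < j.+1) x i ^+ (p ^ (j - i)).

Lemma eq_as_chain x y j : x =1 y -> as_chain x j = as_chain y j.
Proof. by move=> xy; apply: eq_bigr => i _; rewrite xy. Qed.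

Lemma as_chain0 x : as_chain x 0 = x 0.
Proof. by rewrite /as_chain big_ord1 expr1. Qed.

Lemma as_chainS x j : as_chain x j.+1 = as_chain x j ^+ p + x j.+1.
Proof.
rewrite /as_chain big_ord_recr /= subnn expr1 frob_sum.
by congr (_ + _); apply: eq_bigr => i _; rewrite -exprM -expnSr subSn // -ltnS.
Qed.

Lemma as_chainB x y j :
  as_chain (fun i => x i - y i) j = as_chain x j - as_chain y j.
Proof. by rewrite /as_chain -sumrB; apply: eq_bigr => i _; rewrite frobnB. Qed.

Lemma as_chain_delta k (a : B) j : (k <= j)%N ->
  as_chain (fun i => if i == k then a else 0) j = a ^+ (p ^ (j - k)).
Proof.
move=> kj; rewrite /as_chain (bigD1 (Ordinal (_ : k < j.+1)%N)) //= eqxx.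
by rewrite big1 ?addr0 // => i ik; rewrite ifN ?frobn0.
Qed.

Lemma as_chain_eq0 x j : (forall i, (i <= j)%N -> x i = 0) -> as_chain x j = 0.
Proof. by move=> x0; rewrite /as_chain big1 // => i _; rewrite x0 ?frobn0 // -ltnS. Qed.

Lemma lcoef_lexp_chain u neg s j : ~~ (p %| s)%N ->
  as_chain (fun i => lcoef (lexp u p) (ray neg s i) - lcoef u (ray neg s i)) j
  = - lcoef u (ray neg s j).
Proof.
move=> p'_s; elim: j => [|j IH]; rewrite ?as_chain0 ?as_chainS ?IH.
  by rewrite lcoef_lexp_Ndvd ?sub0r // absz_ray expn0 muln1.
by rewrite rayS lcoef_lexp_mulp frobN addrA addNr add0r.
Qed.

Lemma lhom_chain c d u neg s j : lhom p c d u -> ~~ (p %| s)%N ->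
  as_chain (fun i => lcoef d (ray neg s i) - lcoef c (ray neg s i)) j
  = - lcoef u (ray neg s j).
Proof.
move=> /lhomE hu p'_s; rewrite -(lcoef_lexp_chain _ _ _ p'_s).
by apply: eq_as_chain => i; rewrite -hu addrK.
Qed.

Lemma lhom_auto_coef c w n : lhom p c c w -> n != 0 -> lcoef w n = 0.
Proof.
move=> hw /ray_decomp[neg [s [j [/andP[_ p'_s] ->]]]].
apply: oppr_inj; rewrite oppr0 -(lhom_chain _ _ hw p'_s).
by apply: as_chain_eq0 => i _; rewrite subrr.
Qed.

Lemma lhom_uniq c d u u' :
  lhom p c d u -> lhom p c d u' -> lcoef u 0 = lcoef u' 0 -> u = u'.
Proof.
move=> hu hu' u0; have hw := lhom_auto_coef (lhom_comp hu (lhom_inv hu')).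
apply: laurent_ext => n; have [->//|n0] := eqVneq n 0.
by apply/eqP; rewrite -subr_eq0; apply/eqP; exact: hw n0.
Qed.

Implicit Types (b : AS p B) (k m : nat).

Lemma phi_coef_ge0 k b n : 0 <= n -> phi_coef k b n = 0.
Proof. by rewrite /phi_coef => n_ge0; rewrite ltNge n_ge0. Qed.

Lemma phi_coef_Ndvd k b n : (0 < k)%N -> ~~ (p %| absz n)%N -> phi_coef k b n = 0.
Proof.
move=> k_gt0 pNn; rewrite /phi_coef; case: ifP => // /andP[_ pkn].
by move: pNn; rewrite (dvdn_trans (dvdn_exp k_gt0 (dvdnn p)) pkn).
Qed.

Lemma phi_coef_ray k b s i : inS p s ->
  phi_coef k b (ray true s i) = if i == k then asf b s else 0.
Proof.
case/andP=> s_gt0 p'_s; rewrite /phi_coef absz_ray ray_lt0 //=.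
case: (ltngtP i k) => [ik|ki|->]; last by rewrite dvdn_mull // mulnK ?expn_gt0 ?prime_gt0.
  case: ifP => // pks; case/negP: p'_s.
  rewrite -(@dvdn_pmul2r (p ^ i)) ?expn_gt0 ?prime_gt0 // -expnS (dvdn_trans _ pks) //.
  by rewrite dvdn_exp2l.
case: ifP => // _; apply: as_supp; rewrite /inS negb_and negbK; apply/orP; right.
rewrite -(subnK (ltnW ki)) expnD mulnA mulnK ?expn_gt0 ?prime_gt0 //.
by rewrite dvdn_mull // dvdn_exp // subn_gt0.
Qed.

Lemma lcoef_psi0 k b (b0 : B) : lcoef (psi k b b0) 0 = b0.
Proof. by rewrite /= phi_coef_ge0 ?add0r. Qed.

Lemma lcoef_psi_ray k b (b0 : B) neg s i : inS p s ->
  lcoef (psi k b b0) (ray neg s i) = if neg && (i == k) then asf b s else 0.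
Proof.
move=> sS; have /andP[s_gt0 _] := sS.
rewrite /= ray_eq0 (gtn_eqF s_gt0) addr0.
by case: neg; rewrite ?phi_coef_ray ?phi_coef_ge0 // /ray expr0 mul1r.
Qed.

Section EssentialSurjectivity.
Variable c : laurent B.
Implicit Types (K : nat).

Lemma lcoef_ray_far s i : (absz (lbnd c) < s * p ^ i)%N -> lcoef c (ray true s i) = 0.
Proof. by move=> far; rewrite lbndP // /ray expr1 mulN1r; lia. Qed.

Definition ray_chain neg s j : B := as_chain (fun i => lcoef c (ray neg s i)) j.

Lemma ray_chain_far s j : (absz (lbnd c) < s)%N -> ray_chain true s j = 0.
Proof.
move=> far; apply: as_chain_eq0 => i _; apply: lcoef_ray_far.
by rewrite (leq_trans far) // leq_pmulr // expn_gt0 prime_gt0.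
Qed.

(* On each ray the solution is the negated chain, cut off from stage K on
   along negative rays; the chain at stage K is then left over as b_s. *)
Definition as_sol_coef K n : B :=
  if n == 0 then 0 else
  let j := logn p (absz n) in
  if ~~ (n < 0) || (j < K)%N then - ray_chain (n < 0) (absz n %/ p ^ j)%N j else 0.

Lemma as_sol_coef_ray K neg s j : inS p s ->
  as_sol_coef K (ray neg s j) = if ~~ neg || (j < K)%N then - ray_chain neg s j else 0.
Proof.
move=> sS; have /andP[s_gt0 _] := sS.
rewrite /as_sol_coef ray_eq0 (gtn_eqF s_gt0) absz_ray ray_logn // ray_lt0 //.
by rewrite mulnK // expn_gt0 prime_gt0.
Qed.

Lemma as_sol_bdd K : exists N : int, forall n, n < N -> as_sol_coef K n = 0.
Proof.
set A := absz (lbnd c); exists (- (p ^ K * A.+1)%N%:Z) => n nN.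
have pK_gt0 : (0 < p ^ K)%N by rewrite expn_gt0 prime_gt0.
have /ray_decomp[neg [s [j [sS nE]]]] : n != 0 by apply/negP => /eqP n0; nia.
rewrite nE as_sol_coef_ray //; case: neg nE => nE /=; last first.
  by move: nN; rewrite nE /ray expr0 mul1r; nia.
case: ifP => // jK; rewrite ray_chain_far ?oppr0 // -/A ltnNge; apply/negP => sA.
have : (s * p ^ j <= A * p ^ K)%N by rewrite leq_mul // leq_exp2l ?prime_gt1 // ltnW.
by move: nN; rewrite nE /ray expr1 mulN1r; nia.
Qed.

Definition as_sol K : laurent B := Laurent (as_sol_bdd K).

Lemma lcoef_as_sol K n : lcoef (as_sol K) n = as_sol_coef K n.
Proof. by []. Qed.

Definition as_base_coef K s : B := if inS p s then ray_chain true s K else 0.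

Lemma as_base_supp K s : ~~ inS p s -> as_base_coef K s = 0.
Proof. by rewrite /as_base_coef => /negbTE ->. Qed.

Lemma as_base_fin K : exists N : nat, forall s, (N <= s)%N -> as_base_coef K s = 0.
Proof. by exists (absz (lbnd c)).+1 => s far; rewrite /as_base_coef ray_chain_far ?if_same. Qed.

Definition as_base K : AS p B := MkAS (@as_base_supp K) (as_base_fin K).

Lemma lhom_as_sol K : (absz (lbnd c) < K)%N ->
  lhom p (psi K (as_base K) (lcoef c 0)) c (as_sol K).
Proof.
move=> LK; apply/lhomE => n.
have [->|/ray_decomp[neg [s [j [sS ->]]]]] := eqVneq n 0.
  rewrite lcoef_lexp_pchar dvdn0 div0z lcoef_psi0 lcoef_as_sol /as_sol_coef eqxx.
  by rewrite frob0 subrr add0r.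
have /andP[s_gt0 p'_s] := sS.
rewrite lcoef_psi_ray // !lcoef_as_sol as_sol_coef_ray // /as_base /as_base_coef /= sS.
case: j => [|j].
  rewrite lcoef_lexp_Ndvd ?absz_ray ?expn0 ?muln1 //.
  have K_gt0 : (0 < K)%N by lia.
  rewrite /ray_chain as_chain0 K_gt0 orbT eq_sym (gtn_eqF K_gt0) andbF.
  by rewrite addr0 sub0r opprK.
rewrite {1}rayS lcoef_lexp_mulp lcoef_as_sol as_sol_coef_ray // /ray_chain as_chainS.
case: neg => /=; first last.
  by rewrite frobN; ring.
case: (ltngtP j.+1 K) => [jK|Kj|<-]; rewrite ?(ltnW jK) ?ltnn ?eqxx /=.
- by rewrite frobN; ring.
- rewrite frob0 subrr add0r lcoef_ray_far //.
  by have := ltn_expl j.+1 (prime_gt1 hp); have := leq_pmull (p ^ j.+1) s_gt0; lia.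
- by rewrite as_chainS frobN; ring.
Qed.
End EssentialSurjectivity.

Variable pg : (0 < p)%N.

Lemma AS_ext b b' : asf b =1 asf b' -> b = b'.
Proof.
case: b b' => f supp fin [f' supp' fin'] /= /functional_extensionality eff'.
by subst f'; congr MkAS; exact: proof_irrelevance.
Qed.

Lemma asf_Fit j b s : asf (Fit pg j b) s = asf b s ^+ (p ^ j).
Proof. by elim: j => [|j IH]; rewrite ?expr1 //= -/(Fit pg j b) IH expnSr exprM. Qed.

Lemma phi_coef_frob k b q : phi_coef k b q ^+ p = phi_coef k.+1 (ASF pg b) (q * p%:Z).
Proof.
rewrite /phi_coef pmulr_llt0 ?ltz_nat // abszM /= expnSr dvdn_pmul2r //.
by case: ifP => _; rewrite ?divnMr ?frob0.
Qed.

Lemma lcoef_trans k m b n :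
  lcoef (trans pg k m b) n = \sum_(k <= j < m) phi_coef j (Fit pg (j - k) b) n.
Proof. by rewrite lcoef_lsum big_map. Qed.

Lemma lhom_trans k m b : (k <= m)%N ->
  lhom p (phi k b) (phi m (Fit pg (m - k) b)) (trans pg k m b).
Proof.
move=> km; apply/lhomE => n /=.
case: (boolP (p %| absz n)%N) => [/absz_dvdP[q ->]|pNn].
  rewrite lcoef_lexp_mulp !lcoef_trans frob_sum -sumrB.
  rewrite (telescope_sumr_eq (fun j => phi_coef j (Fit pg (j - k) b) (q * p%:Z))) //.
    by rewrite subnn subrK.
  by move=> j /andP[kj _]; rewrite phi_coef_frob subSn.
rewrite lcoef_lexp_Ndvd // lcoef_trans sub0r.
case: (ltngtP k m) km => // [km|<-] _; last by rewrite big_geq // subnn oppr0 add0r.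
rewrite big_ltn // subnn /= big1_seq => [|j /andP[_]]; last first.
  by rewrite mem_index_iota => /andP[kj _]; apply: phi_coef_Ndvd => //; lia.
have m_gt0 : (0 < m)%N by lia.
by rewrite (phi_coef_Ndvd _ m_gt0 pNn) addr0 addNr.
Qed.

Lemma lhom_fmor k k' m b b' (b0 b0' a : B) : (k <= m)%N -> (k' <= m)%N ->
  Fit pg (m - k) b = Fit pg (m - k') b' -> a ^+ p - a + b0 = b0' ->
  lhom p (psi k b b0) (psi k' b' b0') (fmor pg k k' m b b' a).
Proof.
move=> km k'm Fbb' ha.
have to_m := lhom_add (lhom_trans b km) (lhom_const ha).
have from_m := lhom_inv (lhom_addr (lconst b0') (lhom_trans b' k'm)).
by apply: (lhom_comp to_m); rewrite Fbb'.
Qed.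

Lemma lcoef_fmor0 k k' m b b' (a : B) : lcoef (fmor pg k k' m b b' a) 0 = a.
Proof.
rewrite /= !lcoef_trans !big1 => [|j _|j _]; rewrite ?phi_coef_ge0 //.
by rewrite add0r subr0.
Qed.

Lemma lhom_eq_fmor k k' m b b' (b0 b0' : B) u : (k <= m)%N -> (k' <= m)%N ->
  Fit pg (m - k) b = Fit pg (m - k') b' -> lhom p (psi k b b0) (psi k' b' b0') u ->
  exists2 a : B, a ^+ p - a + b0 = b0' & fmor pg k k' m b b' a = u.
Proof.
move=> km k'm Fbb' hu; have := lhom_coef0 hu; rewrite !lcoef_psi0 => hu0.
exists (lcoef u 0) => //.
exact: lhom_uniq (lhom_fmor km k'm Fbb' hu0) hu (lcoef_fmor0 _ _ _ _ _ _).
Qed.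

Lemma lhom_colim_eq k k' b b' (b0 b0' : B) u :
  lhom p (psi k b b0) (psi k' b' b0') u -> colim_eq pg k b k' b'.
Proof.
move=> hu; set m := (k + k' + absz (lbnd u))%N.
exists m; split; [lia | lia | apply: AS_ext => s; rewrite !asf_Fit].
case: (boolP (inS p s)) => sS; last by rewrite !(as_supp _ sS) !frobn0.
have /andP[s_gt0 p'_s] := sS.
have := lhom_chain true m hu p'_s.
under eq_as_chain => i do rewrite !lcoef_psi_ray //=.
rewrite (as_chainB (fun i => if i == k' then asf b' s else 0)).
rewrite !as_chain_delta ?lbndP //; try lia.
  by move/eqP; rewrite oppr0 subr_eq0 => /eqP ->.
have := ltn_expl m (prime_gt1 hp); have := leq_pmull (p ^ m) s_gt0.
by rewrite /ray expr1 mulN1r; lia.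
Qed.
End PrimeCharacteristic.

Theorem theorem4p16 (p : nat) (hp : prime p) (B : comPzRingType)
    (hB : (p%:R : B) = 0) :
  (* essential surjectivity *)
  (forall c : laurent B, exists (k : nat) (b : AS p B) (b0 : B) (u : laurent B),
      lhom p (psi k b b0) c u) /\
  (* full faithfulness *)
  (forall (k k' : nat) (b b' : AS p B) (b0 b0' : B),
     (~ colim_eq (prime_gt0 hp) k b k' b' ->
        forall u : laurent B, ~ lhom p (psi k b b0) (psi k' b' b0') u) /\
     (forall m : nat, (k <= m)%N -> (k' <= m)%N ->
        Fit (prime_gt0 hp) (m - k) b = Fit (prime_gt0 hp) (m - k') b' ->
        [/\ forall v : B, v ^+ p - v + b0 = b0' ->
              lhom p (psi k b b0) (psi k' b' b0') (fmor (prime_gt0 hp) k k' m b b' v),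
            forall v w : B, v ^+ p - v + b0 = b0' -> w ^+ p - w + b0 = b0' ->
              fmor (prime_gt0 hp) k k' m b b' v = fmor (prime_gt0 hp) k k' m b b' w ->
              v = w
          & forall u : laurent B, lhom p (psi k b b0) (psi k' b' b0') u ->
              exists2 v : B, v ^+ p - v + b0 = b0' &
                fmor (prime_gt0 hp) k k' m b b' v = u])).
Proof.
split=> [c | k k' b b' b0 b0'].
  set K := (absz (lbnd c)).+1.
  by exists K, (as_base hp c K), (lcoef c 0), (as_sol hp c K); apply: lhom_as_sol.
split=> [not_colim u hu | m km k'm Fbb'].
  by apply: not_colim; apply: lhom_colim_eq hu.
split=> [v hv | v w _ _ /(congr1 (fun u => lcoef u 0)) | u hu].
- exact: lhom_fmor.
- by rewrite !lcoef_fmor0.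
- exact: lhom_eq_fmor hu.
Qed.
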